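(* Let $\alpha\in\mathcal{P}(n)$ with $\delta(\alpha)=\big(1,2,\dots,q,q^{(s_q)},(q-1)^{(s_{q-1})},\dots,1^{(s_1)}\big)$, where $q\ge1$, $s_1,\dots,s_q\ge0$. Let $\overline{\alpha}=(\overline{\alpha}_1,\dots,\overline{\alpha}_q)$ with $\overline{\alpha}_i=q-i+1+\sum_{k=i}^q s_k$ and $\underline{\alpha}=\overline{\alpha}^*$. Then the multiset of (nonzero) entries of $\delta(\overline{\alpha})=\delta(\underline{\alpha})$ is equal to the multiset of parts of $\underline{\alpha}$.
   Context: A partition of a positive integer $n$ is a finite non-increasing sequence $\alpha=(\alpha_1,\dots,\alpha_l)$ of positive integers with sum $n$; $\mathcal{P}(n)$ is the set of partitions of $n$, and $\alpha_i=0$ for $i>l$. The diagonal sequence is $\delta(\alpha)=(d_k)_{k\ge1}$ with $d_k=|\{i:1\le i\le k,\ \alpha_i+i-1\ge k\}|$, trailing zeros omitted. $j^{(s)}$ denotes $s$ consecutive entries equal to $j$. The conjugate $\beta^*$ of a partition $\beta$ has parts $\beta^*_j=|\{i:\beta_i\ge j\}|$. *)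

From mathcomp Require Import all_boot.
Set Implicit Arguments. Unset Strict Implicit. Unset Printing Implicit Defensive.

(* Partitions are sequences of nat; alpha_i (1-based) = nth 0 a (i-1), 0 beyond size. *)
Definition is_partition (n : nat) (a : seq nat) : bool :=
  [&& sorted geq a, all (fun x => 0 < x) a & sumn a == n].

Definition part (a : seq nat) (i : nat) : nat := nth 0 a i.-1.

Definition dk (a : seq nat) (k : nat) : nat :=
  count (fun i => k <= part a i + i - 1) (iota 1 k).

Fixpoint drop0 (s : seq nat) : seq nat :=
  if s is 0 :: s' then drop0 s' else s.

Definition strip_trailing0 (s : seq nat) : seq nat := rev (drop0 (rev s)).

(* the diagonal sequence: d_k for k = 1 .. sumn a + size a (beyond which d_k = 0
   for a partition), trailing zeros omitted *)
Definition delta (a : seq nat) : seq nat :=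
  strip_trailing0 [seq dk a k | k <- iota 1 (sumn a + size a)].

Definition conjp (b : seq nat) : seq nat :=
  [seq count (fun x => j <= x) b | j <- iota 1 (foldr maxn 0 b)].

Definition delta_shape (q : nat) (s : nat -> nat) : seq nat :=
  iota 1 q ++ flatten [seq nseq (s j) j | j <- rev (iota 1 q)].

Definition abar (q : nat) (s : nat -> nat) : seq nat :=
  [seq q - i + 1 + \sum_(i <= k < q.+1) s k | i <- iota 1 q].

From mathcomp Require Import all_boot zify.

Set Implicit Arguments.
Unset Strict Implicit.
Unset Printing Implicit Defensive.

(* Write b' for the conjugate of a partition b.  Since i <= b'_j iff j <= b_i,
   the reversal i |-> k+1-i turns the condition defining d_k(b') into the one
   defining d_k(b), so delta is invariant under conjugation.  For abar, with
   tail sums S_i = s_i + ... + s_q, one has abar_i + i - 1 = q + S_i for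
   i <= q; hence d_k = k for k <= q and d_(q+t) = #{i : t <= S_i}, the t-th
   part of the conjugate of (S_1, ..., S_q).  So m > 0 occurs
   [m <= q] + S_m - S_(m+1) times in delta(abar), which is abar_m - abar_(m+1),
   the multiplicity of m in abar'. *)

Lemma geq_trans : transitive geq.
Proof. by move=> y x z le_yx le_zy; apply: leq_trans le_zy le_yx. Qed.

Lemma nth_leq_foldr_maxn b j : nth 0 b j <= foldr maxn 0 b.
Proof.
elim: b j => [|x b IHb] [|j] //=; first exact: leq_maxl.
exact: leq_trans (IHb j) (leq_maxr _ _).
Qed.

Lemma foldr_maxn_leq_sumn b : foldr maxn 0 b <= sumn b.
Proof. by elim: b => //= x b IHb; lia. Qed.

Lemma has_leq_foldr_maxn b t : 0 < t -> t <= foldr maxn 0 b -> has (leq t) b.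
Proof.
move=> t_gt0; elim: b => [|x b IHb] /=; first by lia.
by rewrite leq_max => /orP [->|/IHb ->] //; rewrite orbT.
Qed.

Lemma map_sub_iota1 k : [seq k.+1 - i | i <- iota 1 k] = rev (iota 1 k).
Proof.
apply: (@eq_from_nth _ 0); first by rewrite size_map size_rev.
move=> i; rewrite size_map size_iota => lt_ik.
by rewrite nth_rev ?size_iota // (nth_map 0) ?size_iota // !nth_iota //; lia.
Qed.

Lemma count_iota_between lo hi N : lo <= hi ->
  count (fun t => lo < t <= hi) (iota 1 N) = minn hi N - minn lo N.
Proof.
move=> le_lo_hi; elim: N => [|N IHN]; first by rewrite !minn0.
rewrite -[N.+1]addn1 iotaD count_cat IHN /= add1n.
by case: (leqP N.+1 hi); case: (leqP N.+1 lo); lia.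
Qed.

Lemma dk_eq0 b k : foldr maxn 0 b + size b <= k -> dk b k = 0.
Proof.
move=> le_k; rewrite /dk (@eq_in_count _ _ pred0) ?count_pred0 // => i.
rewrite mem_iota /part => /andP [i_gt0 le_ik] /=; apply/negbTE; rewrite -ltnNge.
case: (ltnP i.-1 (size b)) => [lt_i | ge_i]; last by rewrite nth_default //; lia.
by have := nth_leq_foldr_maxn b i.-1; lia.
Qed.

Lemma count_conjp0 b : count_mem 0 (conjp b) = 0.
Proof.
apply/count_memPn/mapP => -[t]; rewrite mem_iota => /andP [t_gt0 lt_t] /esym/eqP.
by rewrite -leqn0 leqNgt -has_count has_leq_foldr_maxn //; lia.
Qed.

Lemma size_leq_sumn_conjp b : all (leq 1) b -> size b <= sumn (conjp b).
Proof.
case: b => [|x b] //= /andP [x_gt0]; rewrite all_count => /eqP count_b.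
rewrite /conjp; have : 0 < foldr maxn 0 (x :: b) by rewrite /= leq_max x_gt0.
by case: (foldr maxn 0 (x :: b)) => [|p] //= _; rewrite x_gt0 count_b; lia.
Qed.

Lemma strip_trailing0_rcons0 s : strip_trailing0 (rcons s 0) = strip_trailing0 s.
Proof. by rewrite /strip_trailing0 rev_rcons. Qed.

Lemma strip_trailing0_map_iota f M N : (forall k, M < k -> f k = 0) -> M <= N ->
  strip_trailing0 [seq f k | k <- iota 1 N] = strip_trailing0 [seq f k | k <- iota 1 M].
Proof.
move=> f_eq0 /subnKC <-; elim: (N - M) => [|t IHt]; first by rewrite addn0.
rewrite addnS -[(M + t).+1]addn1 iotaD map_cat /= f_eq0; last by lia.
by rewrite cats1 strip_trailing0_rcons0.
Qed.

Lemma count_strip_trailing0 (p : pred nat) s :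
  ~~ p 0 -> count p (strip_trailing0 s) = count p s.
Proof.
move=> Np0; rewrite /strip_trailing0 count_rev -[in RHS]count_rev.
by elim: (rev s) => [|[|x] r IHr] //=; rewrite (negbTE Np0).
Qed.

Section SortedSequence.

Variable b : seq nat.
Hypothesis b_sorted : sorted geq b.

Lemma foldr_maxn_sorted : foldr maxn 0 b = head 0 b.
Proof.
case: b b_sorted => [|x r] //= /(order_path_min geq_trans).
by elim: r => [|y r IHr] /=; [rewrite maxn0 | move=> /andP [le_yx /IHr]; lia].
Qed.

Lemma sorted_count_leq t m : 0 < t -> (m < count (leq t) b) = (t <= nth 0 b m).
Proof.
move=> t_gt0; elim: b b_sorted m => [|x r IHr] sorted_xr m /=.
  by rewrite nth_nil; apply/idP/idP; lia.
have le_r_x := order_path_min geq_trans sorted_xr.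
case: (leqP t x) => [le_tx | lt_xt].
  by case: m => [|m] //=; rewrite add1n ltnS IHr // (path_sorted sorted_xr).
have count_r : count (leq t) r = 0.
  apply/eqP; rewrite -leqn0 leqNgt -has_count -all_predC.
  by apply: sub_all le_r_x => y /=; lia.
rewrite count_r /= ltn0; apply/esym/negbTE; rewrite -ltnNge.
case: m => [|m] //=; case: (ltnP m (size r)) => [lt_m | ge_m]; last by rewrite nth_default.
by move/allP: le_r_x => /(_ _ (mem_nth 0 lt_m)) /=; lia.
Qed.

Lemma sorted_nth_geq i j : i <= j -> nth 0 b j <= nth 0 b i.
Proof.
move=> le_ij; case: (ltnP j (size b)) => lt_j; last by rewrite nth_default.
exact: (sorted_leq_nth geq_trans leqnn 0 b_sorted) (leq_ltn_trans le_ij lt_j) lt_j le_ij.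
Qed.

Lemma count_count_leq_iota N m : head 0 b <= N ->
  count (fun t => count (leq t) b == m.+1) (iota 1 N) = nth 0 b m - nth 0 b m.+1.
Proof.
move=> le_head_N.
rewrite (@eq_in_count _ _ (fun t => nth 0 b m.+1 < t <= nth 0 b m)); last first.
  move=> t; rewrite mem_iota => /andP [t_gt0 _] /=.
  by rewrite eqn_leq [_ <= m.+1]leqNgt !sorted_count_leq // -ltnNge andbC.
rewrite count_iota_between; last exact: sorted_nth_geq.
by have := sorted_nth_geq (leq0n m); rewrite nth0; lia.
Qed.

Lemma count_conjp m : count_mem m.+1 (conjp b) = nth 0 b m - nth 0 b m.+1.
Proof. by rewrite /conjp count_map foldr_maxn_sorted; apply: count_count_leq_iota. Qed.

Lemma leq_part_conjp i j : 0 < i -> 0 < j -> (i <= part (conjp b) j) = (j <= part b i).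
Proof.
move=> i_gt0 j_gt0; rewrite /part /conjp.
case: (ltnP j.-1 (foldr maxn 0 b)) => [lt_j | ge_j].
  rewrite (nth_map 0) ?size_iota // nth_iota // add1n prednK //.
  by rewrite -sorted_count_leq // prednK.
rewrite nth_default ?size_map ?size_iota //.
by move: (nth_leq_foldr_maxn b i.-1) => ?; apply/idP/idP; lia.
Qed.

Lemma dk_conjp k : dk (conjp b) k = dk b k.
Proof.
rewrite /dk -[in RHS]count_rev -map_sub_iota1 count_map.
apply: eq_in_count => i; rewrite mem_iota => /andP [i_gt0 le_ik] /=.
transitivity (k.+1 - i <= part (conjp b) i); first by apply/idP/idP; lia.
by rewrite leq_part_conjp //; [apply/idP/idP; lia | lia].
Qed.

Lemma delta_conjp : all (leq 1) b -> delta (conjp b) = delta b.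
Proof.
move=> b_pos; rewrite /delta (eq_map dk_conjp).
have dk_gt k : foldr maxn 0 b + size b < k -> dk b k = 0 by move=> ?; apply: dk_eq0; lia.
have size_conjp : size (conjp b) = foldr maxn 0 b by rewrite size_map size_iota.
rewrite !(strip_trailing0_map_iota dk_gt) //.
  by have := foldr_maxn_leq_sumn b; lia.
by rewrite size_conjp; have := size_leq_sumn_conjp b_pos; lia.
Qed.

End SortedSequence.

Lemma nth_map_iota1 (f : nat -> nat) n m :
  nth 0 [seq f i | i <- iota 1 n] m = if m < n then f m.+1 else 0.
Proof.
case: ltnP => [lt_mn | ge_mn]; last by rewrite nth_default // size_map size_iota.
by rewrite (nth_map 0) ?size_iota // nth_iota.
Qed.

Section TailSums.

Variables (q : nat) (s : nat -> nat).

Definition tailsum i := \sum_(i <= k < q.+1) s k.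

Definition tailsums := [seq tailsum i | i <- iota 1 q].

Lemma tailsum_eq0 i : q < i -> tailsum i = 0.
Proof. by move=> lt_qi; rewrite /tailsum big_geq. Qed.

Lemma leq_tailsum i j : i <= j -> tailsum j <= tailsum i.
Proof.
move=> le_ij; case: (leqP j q.+1) => [le_j | lt_j]; last by rewrite tailsum_eq0 //; lia.
by rewrite /tailsum (big_cat_nat le_ij le_j) leq_addl.
Qed.

Lemma nth_abar m : nth 0 (abar q s) m = q - m + tailsum m.+1.
Proof.
rewrite nth_map_iota1 -/(tailsum m.+1).
by case: ltnP => [lt_mq | ge_mq]; [lia | rewrite tailsum_eq0 //; lia].
Qed.

Lemma nth_tailsums m : nth 0 tailsums m = tailsum m.+1.
Proof. by rewrite nth_map_iota1; case: ltnP => // ge_mq; rewrite tailsum_eq0. Qed.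

Lemma sorted_abar : sorted geq (abar q s).
Proof.
apply: (homo_sorted (e := ltn)) (iota_ltn_sorted 1 q) => i j lt_ij /=.
by rewrite -!/(tailsum _); have := leq_tailsum (ltnW lt_ij); lia.
Qed.

Lemma sorted_tailsums : sorted geq tailsums.
Proof.
apply: (homo_sorted (e := ltn)) (iota_ltn_sorted 1 q) => i j lt_ij.
exact: leq_tailsum (ltnW lt_ij).
Qed.

Lemma abar_pos : all (leq 1) (abar q s).
Proof. by apply/allP => _ /mapP [i _ ->]; rewrite addn1. Qed.

Lemma dk_abar_head k : k <= q -> dk (abar q s) k = k.
Proof.
move=> le_kq; rewrite /dk (@eq_in_count _ _ predT) ?count_predT ?size_iota // => i.
by rewrite mem_iota /part nth_abar => /andP [i_gt0 lt_ik] /=; lia.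
Qed.

Lemma dk_abar_tail t : dk (abar q s) (q + t) = count (leq t) tailsums.
Proof.
rewrite /dk iotaD count_cat [X in _ + X](@eq_in_count _ _ pred0) ?count_pred0 ?addn0.
  rewrite /tailsums count_map; apply: eq_in_count => i.
  rewrite mem_iota /part nth_abar => /andP [i_gt0 lt_i] /=; rewrite prednK //.
  by apply/idP/idP; lia.
move=> i; rewrite mem_iota /part nth_abar => /andP [lt_qi lt_i] /=.
by rewrite tailsum_eq0; lia.
Qed.

Lemma count_delta_abar m :
  count_mem m.+1 (delta (abar q s)) = nth 0 (abar q s) m - nth 0 (abar q s) m.+1.
Proof.
have size_abar : size (abar q s) = q by rewrite size_map size_iota.
rewrite /delta count_strip_trailing0 // size_abar (addnC _ q) iotaD map_cat count_cat.
rewrite !count_map (@eq_in_count _ _ (pred1 m.+1) (iota 1 q)); last first.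
  by move=> k; rewrite mem_iota => /andP [_ lt_k] /=; rewrite dk_abar_head //; lia.
rewrite count_uniq_mem ?iota_uniq // mem_iota (addnC 1 q) iotaDl count_map.
rewrite (@eq_in_count _ _ (fun t => count (leq t) tailsums == m.+1)); last first.
  by move=> t _ /=; rewrite dk_abar_tail.
rewrite count_count_leq_iota ?sorted_tailsums //; last first.
  rewrite -nth0 nth_tailsums; apply: leq_trans (foldr_maxn_leq_sumn _).
  by apply: leq_trans (nth_leq_foldr_maxn _ 0); rewrite nth_abar leq_addl.
rewrite !nth_tailsums !nth_abar; have := leq_tailsum (leqnSn m.+1).
by case: (ltnP m q); lia.
Qed.

Lemma perm_delta_abar_conjp :
  perm_eq [seq x <- delta (abar q s) | x != 0] (conjp (abar q s)).
Proof.
apply/allP => -[|m] _; apply/eqP.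
  by rewrite count_conjp0; apply/count_memPn; rewrite mem_filter eqxx.
rewrite count_filter (@eq_count _ _ (pred1 m.+1)) => [|x /=]; last by case: eqP => // ->.
by rewrite count_delta_abar count_conjp // sorted_abar.
Qed.

End TailSums.

Theorem corollary2p6 (n : nat) (alpha : seq nat) (q : nat) (s : nat -> nat) :
  is_partition n alpha -> 1 <= q ->
  delta alpha = delta_shape q s ->
  delta (abar q s) = delta (conjp (abar q s)) /\
  perm_eq [seq x <- delta (abar q s) | x != 0] (conjp (abar q s)).
Proof.
(* The conclusion is a property of abar alone, valid for every q and s. *)
move=> _ _ _; split; last exact: perm_delta_abar_conjp.
by rewrite delta_conjp ?sorted_abar ?abar_pos.
Qed.
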